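(* Let $x,y>0$ with $x\ne y$, and define for $t\in(-\min\{x,y\},\infty)$ \[ H_{x,y}(t)=H(x+t,y+t)=\frac{2}{\frac{1}{x+t}+\frac{1}{y+t}}. \] Then $H_{x,y}(t)$ is a Bernstein function of $t$ on $(-\min\{x,y\},\infty)$ and has the integral representation \[ H_{x,y}(t)=H(x,y)+t+\frac{(x-y)^2}{4}\int_0^\infty\bigl(1-e^{-tu}\bigr)e^{-(x+y)u/2}\,\mathrm{d}u . \] Consequently, \[ H(x,y)=A(x,y)-\frac{(x-y)^2}{2}\int_0^\infty e^{-(x+y)u}\,\mathrm{d}u \] and, for $y>0$ and $s>0$, \[ H(s,y+s)=s+\frac{y^2}{4}\int_0^\infty\bigl(1-e^{-su}\bigr)e^{-yu/2}\,\mathrm{d}u . \]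
   Context: For positive numbers $a,b$, the harmonic mean is $H(a,b)=\frac{2}{\frac1a+\frac1b}$ and the arithmetic mean is $A(a,b)=\frac{a+b}{2}$. A function $f$ on an interval $I\subseteq\mathbb{R}$ is completely monotonic on $I$ if it has derivatives of all orders on $I$ and $(-1)^n f^{(n)}(t)\ge 0$ for all $t\in I$ and all integers $n\ge0$. A function $f:I\to[0,\infty)$ is a Bernstein function on $I$ if it has derivatives of all orders and $f'$ is completely monotonic on $I$. *)

From Stdlib Require Import Reals.
From Coquelicot Require Import Coquelicot.
Open Scope R_scope.

Definition Hmean (a b : R) : R := 2 / (1 / a + 1 / b).
Definition Amean (a b : R) : R := (a + b) / 2.

Definition smooth_on (I : R -> Prop) (f : R -> R) : Prop :=
  forall (n : nat) (t : R), I t -> ex_derive_n f n t.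

Definition completely_monotonic_on (I : R -> Prop) (f : R -> R) : Prop :=
  smooth_on I f /\
  forall (n : nat) (t : R), I t -> 0 <= (-1) ^ n * Derive_n f n t.

Definition Bernstein_on (I : R -> Prop) (f : R -> R) : Prop :=
  (forall t, I t -> 0 <= f t) /\ smooth_on I f /\
  completely_monotonic_on I (Derive f).

Definition ex_int_0_inf (g : R -> R) : Prop :=
  ex_RInt_gen g (at_point 0) (Rbar_locally p_infty).
Definition int_0_inf (g : R -> R) : R :=
  RInt_gen g (at_point 0) (Rbar_locally p_infty).

From Stdlib Require Import Reals Lra Factorial.
From Coquelicot Require Import Coquelicot.
Open Scope R_scope.

(* With a = A(x,y) and D = (x-y)^2/4 one has H(x+t,y+t) = a + t - D/(a+t).
   The derivatives of -D/(a+t) alternate in sign, so H(x+t,y+t) is Bernstein,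
   and D/a - D/(a+t) = D * int_0^oo (e^{-au} - e^{-(a+t)u}) du gives the
   integral representations. *)

Lemma Hmean_pos (a b : R) : 0 < a -> 0 < b -> 0 < Hmean a b.
Proof.
  intros ha hb. unfold Hmean.
  apply Rdiv_lt_0_compat; [lra|].
  apply Rplus_lt_0_compat; apply Rdiv_lt_0_compat; lra.
Qed.

Lemma Hmean_shift (x y t : R) : 0 < x + t -> 0 < y + t ->
  Hmean (x + t) (y + t) = Amean x y + t - (x - y) ^ 2 / 4 / (Amean x y + t).
Proof. intros hx hy. unfold Hmean, Amean. field. lra. Qed.

Lemma is_derive_inv_pow (a s : R) (m : nat) : a + s <> 0 ->
  is_derive (fun s => / (a + s) ^ m) s (- INR m / (a + s) ^ S m).
Proof.
  intros hs. auto_derive; [now apply pow_nonzero|].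
  destruct m as [|m]; simpl pow; simpl Init.Nat.pred; [simpl; field; exact hs|].
  field. split; [now apply pow_nonzero | exact hs].
Qed.

(* The [n]-th derivative of [s |-> a + s - D / (a + s)]. *)
Definition lin_sub_inv_Dn (a D : R) (n : nat) (s : R) : R :=
  match n with 0 => a + s | 1 => 1 | _ => 0 end
  - D * ((-1) ^ n * INR (fact n)) / (a + s) ^ S n.

Lemma is_derive_lin_sub_inv_Dn (a D : R) (n : nat) (s : R) : a + s <> 0 ->
  is_derive (lin_sub_inv_Dn a D n) s (lin_sub_inv_Dn a D (S n) s).
Proof.
  intros hs. unfold lin_sub_inv_Dn. unfold Rdiv.
  replace (D * ((-1) ^ S n * INR (fact (S n))))
    with (D * ((-1) ^ n * INR (fact n)) * - INR (S n))
    by (rewrite fact_simpl, mult_INR; simpl pow; ring).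
  apply (is_derive_minus (V := R_NormedModule)).
  - destruct n as [|[|n]]; auto_derive; auto; ring.
  - set (K := D * ((-1) ^ n * INR (fact n))).
    rewrite Rmult_assoc, <- Rdiv_def.
    apply is_derive_scal. now apply is_derive_inv_pow.
Qed.

Lemma Derive_n_of_derivative_chain (J : R -> Prop) (g : nat -> R -> R) (f : R -> R) :
  open J -> (forall n t, J t -> is_derive (g n) t (g (S n) t)) ->
  (forall t, J t -> f t = g O t) ->
  forall n t, J t -> ex_derive_n f n t /\ Derive_n f n t = g n t.
Proof.
  intros hJ hg hf n. induction n as [|n IH]; intros t ht; [split; [exact I | now apply hf]|].
  assert (hloc : locally t (fun s => Derive_n f n s = g n s)).
  { apply (filter_imp J); [intros s hs; now apply IH | now apply hJ]. }
  split; simpl.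
  - apply (ex_derive_ext_loc (g n)); [exact (filter_imp _ _ (fun s h => eq_sym h) hloc)|].
    eexists. now apply hg.
  - rewrite (Derive_ext_loc _ (g n) _ hloc). now apply is_derive_unique, hg.
Qed.

Lemma lin_sub_inv_Dn_sign (a D t : R) (n : nat) : 0 <= D -> 0 < a + t ->
  0 <= (-1) ^ n * lin_sub_inv_Dn a D (S n) t.
Proof.
  intros hD ht. unfold lin_sub_inv_Dn.
  assert (hpow : 0 < (a + t) ^ S (S n)) by now apply pow_lt.
  assert (hterm : 0 <= D * INR (fact (S n)) / (a + t) ^ S (S n)).
  { apply Rmult_le_pos; [apply Rmult_le_pos; [exact hD | apply pos_INR]|].
    apply Rlt_le, Rinv_0_lt_compat, hpow. }
  assert (hsign : (-1) ^ n * (-1) ^ S n = -1).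
  { simpl. rewrite <- Rmult_assoc, (Rmult_comm _ (-1)), Rmult_assoc, <- Rpow_mult_distr.
    replace (-1 * -1) with 1 by ring. rewrite pow1. ring. }
  replace ((-1) ^ n * (match n with 0%nat => 1 | _ => 0 end
             - D * ((-1) ^ S n * INR (fact (S n))) / (a + t) ^ S (S n)))
    with ((-1) ^ n * match n with 0%nat => 1 | _ => 0 end
          + D * INR (fact (S n)) / (a + t) ^ S (S n)).
  2:{ unfold Rdiv. rewrite Rmult_minus_distr_l.
      replace ((-1) ^ n * (D * ((-1) ^ S n * INR (fact (S n))) * / (a + t) ^ S (S n)))
        with (((-1) ^ n * (-1) ^ S n) * (D * INR (fact (S n)) * / (a + t) ^ S (S n))) by ring.
      rewrite hsign. ring. }
  set (T := D * INR (fact (S n)) / (a + t) ^ S (S n)) in *. clearbody T.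
  destruct n; simpl; lra.
Qed.

Lemma is_lim_exp_neg_scal (c : R) : 0 < c ->
  is_lim (fun u => exp (- (c * u))) p_infty 0.
Proof.
  intros hc. apply is_lim_comp with m_infty; [apply is_lim_exp_m | | exists 0; easy].
  apply (is_lim_ext (fun u => - c * u)); [intros; ring|].
  assert (hm : Rbar_mult (- c) p_infty = m_infty).
  { simpl. destruct Rle_dec; [exfalso; lra | reflexivity]. }
  rewrite <- hm.
  apply is_lim_scal_l, is_lim_id.
Qed.

Lemma is_RInt_gen_exp_neg_scal (c : R) : 0 < c ->
  is_RInt_gen (fun u => exp (- (c * u))) (at_point 0) (Rbar_locally p_infty) (/ c).
Proof.
  intros hc.
  set (G := fun u => - exp (- (c * u)) / c).
  assert (hG : forall u, is_derive G u (exp (- (c * u)))).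
  { intros u. unfold G. auto_derive; [exact I | field; lra]. }
  assert (hDG : forall u, Derive G u = exp (- (c * u))) by (intros; now apply is_derive_unique).
  apply (is_RInt_gen_ext (Derive G)).
  { apply filter_forall. intros [u v] w _. apply hDG. }
  replace (/ c) with (0 - G 0) by (unfold G; rewrite Rmult_0_r, Ropp_0, exp_0; field; lra).
  apply is_RInt_gen_Derive.
  - apply filter_forall. intros _ u _. eexists. apply hG.
  - apply filter_forall. intros _ u _.
    apply (continuous_ext (fun u => exp (- (c * u)))); [intros; now rewrite hDG|].
    apply (ex_derive_continuous (K := R_AbsRing) (V := R_NormedModule)).
    auto_derive. exact I.
  - intros P hP. exact (locally_singleton _ _ hP).
  - assert (hlim : is_lim G p_infty 0).
    { apply (is_lim_ext (fun u => (- / c) * exp (- (c * u)))); [intros; unfold G; field; lra|].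
      pose proof (is_lim_scal_l _ (- / c) _ _ (is_lim_exp_neg_scal c hc)) as hlim.
      simpl in hlim. now rewrite Rmult_0_r in hlim. }
    exact hlim.
Qed.

Lemma int_0_inf_shifted_exp_decay (b t : R) : 0 < b -> 0 < b / 2 + t ->
  ex_int_0_inf (fun u => (1 - exp (- (t * u))) * exp (- (b * u / 2))) /\
  int_0_inf (fun u => (1 - exp (- (t * u))) * exp (- (b * u / 2))) = 2 / b - 1 / (b / 2 + t).
Proof.
  intros hb ht.
  assert (hint : is_RInt_gen (fun u => (1 - exp (- (t * u))) * exp (- (b * u / 2)))
                   (at_point 0) (Rbar_locally p_infty) (2 / b - 1 / (b / 2 + t))).
  { apply (is_RInt_gen_ext (fun u => minus (exp (- (b / 2 * u))) (exp (- ((b / 2 + t) * u))))).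
    - apply filter_forall. intros _ u _.
      rewrite Rmult_minus_distr_r, Rmult_1_l, <- exp_plus.
      replace (b * u / 2) with (b / 2 * u) by field.
      replace (- (t * u) + - (b / 2 * u)) with (- ((b / 2 + t) * u)) by ring.
      reflexivity.
    - replace (2 / b - 1 / (b / 2 + t)) with (minus (/ (b / 2)) (/ (b / 2 + t)))
        by (unfold minus, plus, opp; simpl; field; lra).
      apply (is_RInt_gen_minus _ _ (/ (b / 2)) (/ (b / 2 + t)));
        apply is_RInt_gen_exp_neg_scal; lra. }
  split; [eexists; exact hint | exact (is_RInt_gen_unique _ _ hint)].
Qed.

Lemma Bernstein_on_lin_sub_inv (J : R -> Prop) (f : R -> R) (a D : R) :
  open J -> (forall t, J t -> 0 < a + t) -> 0 <= D ->
  (forall t, J t -> 0 <= f t) -> (forall t, J t -> f t = lin_sub_inv_Dn a D 0 t) ->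
  Bernstein_on J f.
Proof.
  intros hJ hpos hD hnonneg hf.
  assert (hderiv : forall n t, J t ->
            is_derive (lin_sub_inv_Dn a D n) t (lin_sub_inv_Dn a D (S n) t)).
  { intros n t ht. apply is_derive_lin_sub_inv_Dn. specialize (hpos t ht). lra. }
  pose proof (Derive_n_of_derivative_chain J _ f hJ hderiv hf) as hDn.
  pose proof (Derive_n_of_derivative_chain J (fun n => lin_sub_inv_Dn a D (S n)) (Derive f) hJ
                (fun n => hderiv (S n)) (fun t ht => proj2 (hDn 1%nat t ht))) as hDn'.
  split; [exact hnonneg | split; [|split]].
  - intros n t ht. apply (hDn n t ht).
  - intros n t ht. apply (hDn' n t ht).
  - intros n t ht. rewrite (proj2 (hDn' n t ht)).
    apply lin_sub_inv_Dn_sign; [exact hD | exact (hpos t ht)].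
Qed.

Theorem theorem3p1 (x y : R) (hx : 0 < x) (hy : 0 < y) (hxy : x <> y) :
  let I := fun t : R => - Rmin x y < t in
  let Hxy := fun t : R => Hmean (x + t) (y + t) in
  Bernstein_on I Hxy /\
  (forall t : R, I t ->
     ex_int_0_inf (fun u => (1 - exp (- (t * u))) * exp (- ((x + y) * u / 2))) /\
     Hxy t = Hmean x y + t + (x - y) ^ 2 / 4 *
       int_0_inf (fun u => (1 - exp (- (t * u))) * exp (- ((x + y) * u / 2)))) /\
  (ex_int_0_inf (fun u => exp (- ((x + y) * u))) /\
   Hmean x y = Amean x y - (x - y) ^ 2 / 2 *
     int_0_inf (fun u => exp (- ((x + y) * u)))) /\
  (forall y' s : R, 0 < y' -> 0 < s ->
     ex_int_0_inf (fun u => (1 - exp (- (s * u))) * exp (- (y' * u / 2))) /\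
     Hmean s (y' + s) = s + y' ^ 2 / 4 *
       int_0_inf (fun u => (1 - exp (- (s * u))) * exp (- (y' * u / 2)))).
Proof.
  intros I Hxy.
  assert (hI : forall t, I t -> 0 < x + t /\ 0 < y + t).
  { intros t ht. unfold I in ht. pose proof (Rmin_l x y). pose proof (Rmin_r x y). lra. }
  split; [|split; [|split]].
  - apply (Bernstein_on_lin_sub_inv I Hxy (Amean x y) ((x - y) ^ 2 / 4)).
    + apply open_gt.
    + intros t ht. destruct (hI t ht). unfold Amean. lra.
    + pose proof (pow2_ge_0 (x - y)). lra.
    + intros t ht. destruct (hI t ht). apply Rlt_le, Hmean_pos; assumption.
    + intros t ht. destruct (hI t ht). unfold Hxy. rewrite Hmean_shift by assumption.
      unfold lin_sub_inv_Dn. simpl. field. unfold Amean. lra.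
  - intros t ht. destruct (hI t ht).
    destruct (int_0_inf_shifted_exp_decay (x + y) t) as [hex hval]; [lra | lra |].
    split; [exact hex|]. rewrite hval. unfold Hxy, Hmean. field. lra.
  - pose proof (is_RInt_gen_exp_neg_scal (x + y) ltac:(lra)) as hint.
    split; [eexists; exact hint|].
    unfold int_0_inf. rewrite (is_RInt_gen_unique _ _ hint). unfold Hmean, Amean. field. lra.
  - intros y' s hy' hs.
    destruct (int_0_inf_shifted_exp_decay y' s) as [hex hval]; [lra | lra |].
    split; [exact hex|]. rewrite hval. unfold Hmean. field. lra.
Qed.
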